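(* Let $\Gamma$ be a simple graph on a finite set $X$ with $|X|\ge3$. 1. $G(\Gamma)$ acts transitively on $X$ if and only if the localized graphs ${}^x\Gamma$, $x\in X$, are pairwise isomorphic. 2. If $G(\Gamma)$ acts doubly transitively on $X$, then for each $x\in X$ the automorphism group $\mathrm{Aut}({}^x\Gamma)$ acts transitively on $X\setminus\{x\}$. 3. If for two distinct points $x,y\in X$ the groups $\mathrm{Aut}({}^x\Gamma)$ and $\mathrm{Aut}({}^y\Gamma)$ act transitively on $X\setminus\{x\}$ and $X\setminus\{y\}$ respectively, then $G(\Gamma)$ acts doubly transitively on $X$.
   Context: The matrix $\mathcal{E}=(\varepsilon_{i,j})$ of a simple graph on $X$ has $\varepsilon_{i,j}=-1$ if $i\ne j$ are adjacent and $1$ otherwise. Graphs with matrices $\mathcal{E},\mathcal{E}'$ are associated if $\varepsilon'_{i,j}=\nu_i\nu_j\varepsilon_{i,j}$ for some $\nu_i\in\{\pm1\}$. $G(\Gamma)$ is the group of permutations $\sigma$ of $X$ such that $\Gamma$ and its image ${}^\sigma\Gamma$ under $\sigma$ are associated. ${}^x\Gamma$ is the unique graph associated to $\Gamma$ in which $x$ is isolated. *)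

From mathcomp Require Import all_boot all_order all_algebra all_fingroup.
Set Implicit Arguments. Unset Strict Implicit. Unset Printing Implicit Defensive.
Import GRing.Theory.
Local Open Scope ring_scope.

Definition simple_graph (X : finType) (e : rel X) : Prop :=
  symmetric e /\ irreflexive e.

Definition sgnb (b : bool) : int := if b then -1 else 1.

Definition eps (X : finType) (e : rel X) (i j : X) : int :=
  if (i != j) && e i j then -1 else 1.

Definition associated (X : finType) (e e' : rel X) : bool :=
  [exists nu : {ffun X -> bool},
     [forall i, [forall j, eps e' i j == sgnb (nu i) * sgnb (nu j) * eps e i j]]].

Definition img_graph (X : finType) (s : {perm X}) (e : rel X) : rel X :=
  fun u v => e ((s^-1)%g u) ((s^-1)%g v).

Definition Ggroup (X : finType) (e : rel X) : {set {perm X}} :=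
  [set s : {perm X} | associated e (img_graph s e)].

Definition switch (X : finType) (e : rel X) (nu : X -> bool) : rel X :=
  fun i j => (i != j) && (sgnb (nu i) * sgnb (nu j) * eps e i j == -1).

(* the localized graph ^x Gamma: switching with respect to the neighbourhood
   of x (nu_y = -1 iff y ~ x); this is the unique graph associated to Gamma in
   which x is isolated. *)
Definition localized (X : finType) (e : rel X) (x : X) : rel X :=
  switch e (fun y => e x y).

Definition isomorphic (X : finType) (e1 e2 : rel X) : Prop :=
  exists s : {perm X}, forall i j, e2 (s i) (s j) = e1 i j.

(* Aut(^x Gamma), viewed as a graph on X \ {x}: permutations of X fixing x
   and preserving the localized graph. *)
Definition Aut_loc (X : finType) (e : rel X) (x : X) : {set {perm X}} :=
  [set s : {perm X} | (s x == x) &&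
     [forall i, [forall j, localized e x (s i) (s j) == localized e x i j]]].

Definition transitive_on (X : finType) (G : {set {perm X}}) (A : {set X}) : Prop :=
  forall y z, y \in A -> z \in A -> exists2 s, s \in G & s y = z.

Definition doubly_transitive (X : finType) (G : {set {perm X}}) : Prop :=
  forall x1 x2 y1 y2 : X, x1 != x2 -> y1 != y2 ->
    exists2 s, s \in G & s x1 = y1 /\ s x2 = y2.

From mathcomp Require Import all_boot all_order all_algebra all_fingroup.
Set Implicit Arguments. Unset Strict Implicit. Unset Printing Implicit Defensive.

(* Switching a graph does not change the parity of the number of edges in any
   triangle {x, i, j}, and these parities (the two-graph of Gamma) determine
   the switching class.  Fixing x, they are the edges of ^x Gamma.  Hence
   G(Gamma) is the group of permutations preserving triangle parities and
   Aut(^x Gamma) is its stabilizer of x: by the cocycle identity for triangle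
   parities, preserving those through one point preserves all of them.  The
   three statements then become elementary facts about a permutation group
   and its point stabilizers. *)

Import GroupScope.

Section PermGroupTransitivity.

Variables (X : finType) (G : {group {perm X}}).

Lemma in_pstab (x : X) s : (s \in 'C_G[x | 'P]) = (s \in G) && (s x == x).
Proof. by rewrite in_setI; congr (_ && _); apply/astab1P/eqP. Qed.

Lemma pstab_transitive x :
  doubly_transitive G -> transitive_on 'C_G[x | 'P] [set~ x].
Proof.
move=> G2 y z; rewrite !in_setC1 => yx zx.
have [s Gs [sx sy]] : exists2 s, s \in G & s x = x /\ s y = z.
  by apply: G2; rewrite eq_sym.
by exists s; rewrite // in_pstab Gs sx eqxx.
Qed.

Lemma transitive_pstab2 x y : x != y -> 2 < #|X| ->
  transitive_on 'C_G[x | 'P] [set~ x] -> transitive_on 'C_G[y | 'P] [set~ y] ->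
  transitive_on G [set: X].
Proof.
move=> xy X3 Gx_tr Gy_tr.
have yx : y != x by rewrite eq_sym.
have [u] : exists u, u \in ~: [set x; y].
  apply/set0Pn; rewrite -card_gt0 -(ltn_add2l #|[set x; y]|) addn0 cardsC.
  by rewrite cards2 xy.
rewrite !inE negb_or => /andP[ux uy].
have inC1 (a b : X) : a != b -> a \in [set~ b] by rewrite in_setC1.
have pstabG a h : h \in 'C_G[a | 'P] -> h \in G by case/setIP.
have reach_x w : exists2 g, g \in G & g x = w.
  case: (eqVneq w y) => [->|wy].
    have [h1 h1G h1x] := Gy_tr x u (inC1 _ _ xy) (inC1 _ _ uy).
    have [h2 h2G h2u] := Gx_tr u y (inC1 _ _ ux) (inC1 _ _ yx).
    exists (h1 * h2); last by rewrite permM h1x.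
    exact: groupM (pstabG _ _ h1G) (pstabG _ _ h2G).
  have [h hG hx] := Gy_tr x w (inC1 _ _ xy) (inC1 _ _ wy).
  by exists h; first exact: pstabG hG.
move=> v w _ _; have [g Gg gx] := reach_x v; have [h Gh hx] := reach_x w.
by exists (g^-1 * h); rewrite ?groupM ?groupV // permM -gx permK.
Qed.

Lemma doubly_transitive_pstab x :
  transitive_on G [set: X] -> transitive_on 'C_G[x | 'P] [set~ x] ->
  doubly_transitive G.
Proof.
move=> G_tr Gx_tr x1 x2 y1 y2 x12 y12.
have [g Gg gx] := G_tr x x1 (in_setT _) (in_setT _).
have [g' Gg' g'x] := G_tr x y1 (in_setT _) (in_setT _).
have gx2 : g^-1 x2 \in [set~ x].
  by rewrite in_setC1 -(inj_eq (@perm_inj _ g)) permKV gx eq_sym.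
have g'y2 : g'^-1 y2 \in [set~ x].
  by rewrite in_setC1 -(inj_eq (@perm_inj _ g')) permKV g'x eq_sym.
have [h] := Gx_tr _ _ gx2 g'y2; rewrite in_pstab => /andP[Gh /eqP hx] hg.
exists (g^-1 * h * g'); first by rewrite !groupM ?groupV.
by rewrite !permM -gx permK hx g'x hg permKV.
Qed.

End PermGroupTransitivity.

Section Signs.

Local Open Scope ring_scope.

Lemma sgnbD a b : sgnb a * sgnb b = sgnb (a (+) b).
Proof. by case: a; case: b; rewrite /sgnb /= ?mulr1 ?mul1r ?mulrNN. Qed.

Lemma sgnb_inj : injective sgnb.
Proof. by do 2!case. Qed.

Lemma sgnb_eqN1 b : (sgnb b == -1) = b.
Proof. by case: b. Qed.

End Signs.

Section TriangleParity.

Variables (X : finType) (e : rel X).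

Definition adj i j := (i != j) && e i j.

Definition tparity x i j := adj x i (+) adj x j (+) adj i j.

Lemma eps_adj i j : eps e i j = sgnb (adj i j).
Proof. by []. Qed.

Lemma tparity_cocycle y z a b :
  tparity z a b = tparity y z a (+) tparity y z b (+) tparity y a b.
Proof.
rewrite /tparity.
by move: (adj z a) (adj z b) (adj a b) (adj y z) (adj y a) (adj y b); do 6!case.
Qed.

Lemma tparity_xx x a : tparity x x a = false.
Proof. by rewrite /tparity /adj eqxx /= addbb. Qed.

End TriangleParity.

Lemma associatedP (X : finType) (e e' : rel X) :
  associated e e' <-> forall x i j, tparity e x i j = tparity e' x i j.
Proof.
split=> [/existsP[nu /forallP nuP] x i j | tp].
  have adj_switch k l : adj e' k l = nu k (+) nu l (+) adj e k l.
    apply: sgnb_inj; move/forallP: (nuP k) => /(_ l) /eqP.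
    by rewrite !eps_adj !sgnbD.
  rewrite /tparity !adj_switch.
  by move: (nu x) (nu i) (nu j) (adj e x i) (adj e x j) (adj e i j); do 6!case.
(* Switch at the vertices where the neighbourhoods of a base point differ. *)
apply/existsP; case: (pickP (@predT X)) => [x0 _ | X0]; last first.
  by exists [ffun=> false]; apply/forallP => i; have := X0 i.
exists [ffun k => adj e x0 k (+) adj e' x0 k].
apply/forallP => i; apply/forallP => j; rewrite !eps_adj !sgnbD !ffunE.
apply/eqP; congr sgnb; move: (tp x0 i j); rewrite /tparity.
move: (adj e x0 i) (adj e x0 j) (adj e i j).
by move: (adj e' x0 i) (adj e' x0 j) (adj e' i j); do 6!case.
Qed.

Lemma tperm_isolated_rel (T : finType) (r : rel T) u v :
  symmetric r -> (forall w, r u w = false) -> (forall w, r v w = false) ->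
  forall a b, r (tperm u v a) (tperm u v b) = r a b.
Proof.
move=> r_sym u_iso v_iso a b.
case: tpermP => [->|->|_ _]; rewrite ?u_iso ?v_iso //.
by case: tpermP => [->|->|//]; rewrite ![r a _]r_sym ?u_iso ?v_iso.
Qed.

Section SwitchingGroup.

Variables (X : finType) (e : rel X).

Lemma adj_img s i j : adj (img_graph s e) i j = adj e (s^-1 i) (s^-1 j).
Proof. by rewrite /adj /img_graph (inj_eq (@perm_inj _ s^-1)). Qed.

Lemma GgroupP s :
  s \in Ggroup e <-> forall y a b, tparity e (s y) (s a) (s b) = tparity e y a b.
Proof.
rewrite inE; split=> [/associatedP sP y a b | sP].
  by rewrite sP /tparity !adj_img !permK.
apply/associatedP => x i j; have := sP (s^-1 x) (s^-1 i) (s^-1 j).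
by rewrite !permKV /tparity !adj_img => ->.
Qed.

Lemma Ggroup_at x (s : {perm X}) :
  (forall a b, tparity e (s x) (s a) (s b) = tparity e x a b) -> s \in Ggroup e.
Proof.
move=> sP; apply/GgroupP => y a b.
by rewrite (tparity_cocycle e (s x) (s y)) !sP -tparity_cocycle.
Qed.

Lemma group_set_Ggroup : group_set (Ggroup e).
Proof.
apply/group_setP; split=> [|s t /GgroupP sP /GgroupP tP].
  by apply/GgroupP => y a b; rewrite !perm1.
by apply/GgroupP => y a b; rewrite !permM tP sP.
Qed.

Canonical Ggroup_group := group group_set_Ggroup.

End SwitchingGroup.

Section SimpleGraph.

Variables (X : finType) (e : rel X).
Hypotheses (e_sym : symmetric e) (e_irr : irreflexive e).

Lemma tparity_sym x : symmetric (tparity e x).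
Proof.
have adj_sym : symmetric (adj e) by move=> i j; rewrite /adj eq_sym e_sym.
by move=> a b; rewrite /tparity (adj_sym a) [adj e x b (+) _]addbC.
Qed.

Lemma localized_tparity x i j : localized e x i j = tparity e x i j.
Proof.
have e_adj k : e x k = adj e x k.
  by rewrite /adj; case: eqVneq => [<-|]; rewrite ?e_irr.
rewrite /localized /switch !e_adj eps_adj !sgnbD sgnb_eqN1.
by case: eqVneq => [<-|//]; rewrite /tparity /adj !eqxx /= addbb.
Qed.

Lemma Aut_locE x : Aut_loc e x = 'C_(Ggroup e)[x | 'P].
Proof.
apply/setP => s; rewrite in_pstab inE andbC.
case: (eqVneq (s x) x) => [sx|]; rewrite ?andbF //= !andbT.
apply/forallP/idP => [sP | /GgroupP sP i].
  apply: (Ggroup_at (x := x)) => a b; move/forallP/(_ b)/eqP: (sP a).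
  by rewrite !localized_tparity sx.
by apply/forallP => j; rewrite !localized_tparity -{1}sx sP.
Qed.

Lemma Ggroup_transitiveP :
  transitive_on (Ggroup e) [set: X] <->
  (forall x y, isomorphic (localized e x) (localized e y)).
Proof.
split=> [G_tr x y | iso x y _ _].
  have [s /GgroupP sP sx] := G_tr x y (in_setT _) (in_setT _).
  by exists s => i j; rewrite !localized_tparity -sx sP.
have [s sP] := iso x y; have {}sP i j : tparity e y (s i) (s j) = tparity e x i j.
  by rewrite -!localized_tparity.
have sx_iso w : tparity e y (s x) w = false.
  by rewrite -(permKV s w) sP tparity_xx.
(* Like y, the vertex s x is isolated in ^y Gamma, so swapping them is harmless. *)
exists (s * tperm (s x) y); last by rewrite permM tpermL.
apply: (Ggroup_at (x := x)) => a b.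
rewrite !permM tpermL tperm_isolated_rel ?sP //; first exact: tparity_sym.
exact: tparity_xx.
Qed.

End SimpleGraph.

Theorem proposition4 (X : finType) (e : rel X) :
  simple_graph e -> 2 < #|X| ->
  [/\ (transitive_on (Ggroup e) [set: X] <->
         (forall x y : X, isomorphic (localized e x) (localized e y))),
      (doubly_transitive (Ggroup e) ->
         forall x : X, transitive_on (Aut_loc e x) [set~ x])
    & (forall x y : X, x != y ->
         transitive_on (Aut_loc e x) [set~ x] ->
         transitive_on (Aut_loc e y) [set~ y] ->
         doubly_transitive (Ggroup e))].
Proof.
move=> [e_sym e_irr] X3; split.
- exact: Ggroup_transitiveP.
- by move=> G2 x; rewrite Aut_locE //; apply: pstab_transitive.
move=> x y xy; rewrite !Aut_locE // => Gx_tr Gy_tr.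
exact: doubly_transitive_pstab (transitive_pstab2 xy X3 Gx_tr Gy_tr) Gx_tr.
Qed.
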